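(* Let $H$ be a $k$-linear semi-Hopf category, let $A$ be a right $H$-comodule category and let $B=A^{{\rm co}H}$. The following are equivalent: (1) ${\rm can}^z_{xy}$ is bijective for all $x,y,z\in X$; (2) for all $x,y\in X$, ${\rm can}^y_{xy}$ is bijective and ${\rm can}^x_{xy}$ has a left inverse; (3) for all $x,y\in X$ there is a $k$-linear map $\gamma_{xy}:H_{xy}\to A_{yx}\otimes_{B_x}A_{xy}$, written $\gamma_{xy}(h)=\sum_i l_i(h)\otimes_{B_x}r_i(h)$, such that for all $h\in H_{xy}$ and $a\in A_{xy}$: $$\sum_i l_i(h)r_i(h)_{[0]}\otimes r_i(h)_{[1]}=1_y\otimes h,\qquad \sum_i a_{[0]}l_i(a_{[1]})\otimes_{B_x}r_i(a_{[1]})=1_x\otimes_{B_x}a.$$ (When these hold, $A$ is called an $H$-Galois category extension of $B$.)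
   Context: Let $k$ be a commutative ring; unadorned $\otimes$ is over $k$. A $k$-linear category $A$ with class of objects $X$ consists of $k$-modules $A_{xy}$, associative compositions $A_{xy}\otimes A_{yz}\to A_{xz}$, $a\otimes b\mapsto ab$, and units $1_x\in A_{xx}$. A $k$-linear semi-Hopf category $H$ (objects $X$) is a $k$-linear category in which each $H_{xy}$ is a $k$-coalgebra with $\Delta_{xy}(h)=h_{(1)}\otimes h_{(2)}$ and counit $\varepsilon_{xy}$, such that $\Delta_{xz}(hh')=h_{(1)}h'_{(1)}\otimes h_{(2)}h'_{(2)}$, $\Delta_{xx}(1_x)=1_x\otimes1_x$, $\varepsilon_{xz}(hh')=\varepsilon_{xy}(h)\varepsilon_{yz}(h')$, $\varepsilon_{xx}(1_x)=1$. A right $H$-comodule category is a $k$-linear category $A$ with objects $X$ such that each $A_{xy}$ is a right $H_{xy}$-comodule, $\rho_{xy}(a)=a_{[0]}\otimes a_{[1]}$, with $\rho_{xz}(ab)=a_{[0]}b_{[0]}\otimes a_{[1]}b_{[1]}$ and $\rho_{xx}(1_x)=1_x\otimes1_x$. Its coinvariants are the $k$-algebras $B_x=A^{{\rm co}H}_x=\{a\in A_{xx}\mid\rho_{xx}(a)=a\otimes1_x\}$; $A_{xy}$ is a $B_x$-$B_y$-bimodule by multiplication. The canonical maps are ${\rm can}^z_{xy}:A_{zx}\otimes_{B_x}A_{xy}\to A_{zy}\otimes H_{xy}$, ${\rm can}^z_{xy}(a\otimes_{B_x}a')=aa'_{[0]}\otimes a'_{[1]}$. *)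

(* Tensor products are not available in MathComp; elements of
   tensor products are represented by finite sums of pure tensors (sequences of
   pairs/triples), and equality in the tensor product is characterized by the
   universal property (equal images under every multilinear / balanced map). *)
From HB Require Import structures.
From mathcomp Require Import all_boot all_order all_algebra.
Set Implicit Arguments. Unset Strict Implicit. Unset Printing Implicit Defensive.
Import GRing.Theory.
Local Open Scope ring_scope.

Section Defs.
Variable k : comPzRingType.

Definition bilin (U V W : lmodType k) (f : U -> V -> W) : Prop :=
  (forall (c : k) u u' v, f (c *: u + u') v = c *: f u v + f u' v) /\
  (forall (c : k) u v v', f u (c *: v + v') = c *: f u v + f u v').

Definition trilin (U V W Z : lmodType k) (f : U -> V -> W -> Z) : Prop :=
  (forall (c : k) u u' v w, f (c *: u + u') v w = c *: f u v w + f u' v w) /\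
  (forall (c : k) u v v' w, f u (c *: v + v') w = c *: f u v w + f u v' w) /\
  (forall (c : k) u v w w', f u v (c *: w + w') = c *: f u v w + f u v w').

Definition teq (V W : lmodType k) (s t : seq (V * W)) : Prop :=
  forall (U : lmodType k) (f : V -> W -> U), bilin f ->
    \sum_(p <- s) f p.1 p.2 = \sum_(p <- t) f p.1 p.2.

Definition teq3 (V W Z : lmodType k) (s t : seq (V * W * Z)) : Prop :=
  forall (U : lmodType k) (f : V -> W -> Z -> U), trilin f ->
    \sum_(p <- s) f p.1.1 p.1.2 p.2 = \sum_(p <- t) f p.1.1 p.1.2 p.2.

Definition tscale (V W : lmodType k) (c : k) (s : seq (V * W)) : seq (V * W) :=
  [seq (c *: p.1, p.2) | p <- s].

Definition is_coalgebra (C : lmodType k) (D : C -> seq (C * C)) (e : C -> k)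
  : Prop :=
  (forall (c : k) h h', teq (D (c *: h + h')) (tscale c (D h) ++ D h')) /\
  (forall (c : k) h h', e (c *: h + h') = c * e h + e h') /\
  (forall h, teq3 [seq (p.1, q.1, q.2) | p <- D h, q <- D p.2]
                  [seq (q.1, q.2, p.2) | p <- D h, q <- D p.1]) /\
  (forall h, \sum_(p <- D h) e p.1 *: p.2 = h) /\
  (forall h, \sum_(p <- D h) e p.2 *: p.1 = h).

Definition is_comodule (C M : lmodType k) (D : C -> seq (C * C)) (e : C -> k)
  (rho : M -> seq (M * C)) : Prop :=
  (forall (c : k) m m', teq (rho (c *: m + m')) (tscale c (rho m) ++ rho m')) /\
  (forall m, teq3 [seq (p.1, q.1, q.2) | p <- rho m, q <- D p.2]
                  [seq (q.1, q.2, p.2) | p <- rho m, q <- rho p.1]) /\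
  (forall m, \sum_(p <- rho m) e p.2 *: p.1 = m).

Record lincat (X : Type) := LinCat {
  lhom : X -> X -> lmodType k;
  lcomp : forall x y z, lhom x y -> lhom y z -> lhom x z;
  lid : forall x, lhom x x }.

Definition is_lincat (X : Type) (C : lincat X) : Prop :=
  (forall x y z, bilin (@lcomp _ C x y z)) /\
  (forall x y z w (a : lhom C x y) (b : lhom C y z) (c : lhom C z w),
      lcomp (lcomp a b) c = lcomp a (lcomp b c)) /\
  (forall x y (a : lhom C x y), lcomp (lid C x) a = a) /\
  (forall x y (a : lhom C x y), lcomp a (lid C y) = a).

Definition is_semiHopf (X : Type) (H : lincat X)
  (D : forall x y, lhom H x y -> seq (lhom H x y * lhom H x y))
  (e : forall x y, lhom H x y -> k) : Prop :=
  is_lincat H /\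
  (forall x y, is_coalgebra (@D x y) (@e x y)) /\
  (forall x y z (h : lhom H x y) (h' : lhom H y z),
      teq (D x z (lcomp h h'))
          [seq (lcomp p.1 q.1, lcomp p.2 q.2) | p <- D x y h, q <- D y z h']) /\
  (forall x, teq (D x x (lid H x)) [:: (lid H x, lid H x)]) /\
  (forall x y z (h : lhom H x y) (h' : lhom H y z),
      e x z (lcomp h h') = e x y h * e y z h') /\
  (forall x, e x x (lid H x) = 1).

Definition is_comodcat (X : Type) (H : lincat X)
  (D : forall x y, lhom H x y -> seq (lhom H x y * lhom H x y))
  (e : forall x y, lhom H x y -> k) (A : lincat X)
  (rho : forall x y, lhom A x y -> seq (lhom A x y * lhom H x y)) : Prop :=
  is_lincat A /\
  (forall x y, is_comodule (@D x y) (@e x y) (@rho x y)) /\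
  (forall x y z (a : lhom A x y) (b : lhom A y z),
      teq (rho x z (lcomp a b))
          [seq (lcomp p.1 q.1, lcomp p.2 q.2) | p <- rho x y a, q <- rho y z b]) /\
  (forall x, teq (rho x x (lid A x)) [:: (lid A x, lid H x)]).

Section Galois.
Variables (X : Type) (H A : lincat X)
  (rho : forall x y, lhom A x y -> seq (lhom A x y * lhom H x y)).

(* b is in B_x = A_x^{co H} *)
Definition coinv (x : X) (b : lhom A x x) : Prop :=
  teq (@rho x x b) [:: (b, lid H x)].

(* s = t as elements of A_zx ⊗_{B_x} A_xy *)
Definition teqB (z x y : X) (s t : seq (lhom A z x * lhom A x y)) : Prop :=
  forall (U : lmodType k) (f : lhom A z x -> lhom A x y -> U), bilin f ->
    (forall b, coinv b -> forall a a', f (lcomp a b) a' = f a (lcomp b a')) ->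
    \sum_(p <- s) f p.1 p.2 = \sum_(p <- t) f p.1 p.2.

(* canonical map can^z_{xy} : A_zx ⊗_{B_x} A_xy -> A_zy ⊗ H_xy on representatives *)
Definition can (z x y : X) (s : seq (lhom A z x * lhom A x y))
  : seq (lhom A z y * lhom H x y) :=
  [seq (lcomp p.1 q.1, q.2) | p <- s, q <- @rho x y p.2].

Definition can_bijective (z x y : X) : Prop :=
  (forall s s' : seq (lhom A z x * lhom A x y), teq (can s) (can s') -> teqB s s') /\
  (forall u : seq (lhom A z y * lhom H x y), exists s : seq (lhom A z x * lhom A x y),
      teq (can s) u).

Definition can_has_left_inverse (z x y : X) : Prop :=
  exists g : seq (lhom A z y * lhom H x y) -> seq (lhom A z x * lhom A x y),
    (forall u u', teq u u' -> teqB (g u) (g u')) /\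
    (forall (c : k) u u', teqB (g (tscale c u ++ u')) (tscale c (g u) ++ g u')) /\
    (forall s : seq (lhom A z x * lhom A x y), teqB (g (can s)) s).

Definition gamma_cond (x y : X) : Prop :=
  exists gamma : lhom H x y -> seq (lhom A y x * lhom A x y),
    (forall (c : k) h h', teqB (gamma (c *: h + h')) (tscale c (gamma h) ++ gamma h')) /\
    (forall h, teq [seq (lcomp p.1 q.1, q.2) | p <- gamma h, q <- @rho x y p.2]
                   [:: (lid A y, h)]) /\
    (forall a, teqB [seq (lcomp p.1 q.1, q.2) | p <- @rho x y a, q <- gamma p.2]
                    [:: (lid A x, a)]).

End Galois.
End Defs.

(* The map [gamma_ext gamma], sending [a ⊗ h] to [a l_i(h) ⊗_B r_i(h)], is a
   two-sided inverse of [can^z_{xy}] for every [z]: the first identity of (3)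
   gives [can ∘ gamma_ext = id], the second one [gamma_ext ∘ can = id].
   Conversely, a bijective [can^y_{xy}] yields [gamma h := can^{-1}(1_y ⊗ h)],
   and the second identity of (3) is obtained by cancelling the left inverse of
   [can^x_{xy}] against [can (gamma_ext gamma (rho a)) = rho a = can (1_x ⊗ a)]. *)
From HB Require Import structures.
From mathcomp Require Import all_boot all_order all_algebra.
From Stdlib Require Import ClassicalEpsilon.
Set Implicit Arguments. Unset Strict Implicit. Unset Printing Implicit Defensive.
Import GRing.Theory.
Local Open Scope ring_scope.

Section Bilinear.
Variable k : comPzRingType.
Variables U V W : lmodType k.
Implicit Types f : U -> V -> W.

Lemma bilin0l f : bilin f -> forall v, f 0 v = 0.
Proof.
move=> [fl _] v; have := fl 1 0 0 v; rewrite !scale1r addr0.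
by move/(congr1 (fun t => t - f 0 v)); rewrite subrr addrK.
Qed.

Lemma bilin0r f : bilin f -> forall u, f u 0 = 0.
Proof.
move=> [_ fr] u; have := fr 1 u 0 0; rewrite !scale1r addr0.
by move/(congr1 (fun t => t - f u 0)); rewrite subrr addrK.
Qed.

Lemma bilinZl f : bilin f -> forall c u v, f (c *: u) v = c *: f u v.
Proof. by move=> fb c u v; have := fb.1 c u 0 v; rewrite addr0 bilin0l ?addr0. Qed.

Lemma bilinZr f : bilin f -> forall c u v, f u (c *: v) = c *: f u v.
Proof. by move=> fb c u v; have := fb.2 c u v 0; rewrite addr0 bilin0r ?addr0. Qed.

Lemma bilinDr f : bilin f -> forall u v v', f u (v + v') = f u v + f u v'.
Proof. by move=> fb u v v'; have := fb.2 1 u v v'; rewrite !scale1r. Qed.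

Lemma sum_tscale f c (s : seq (U * V)) : bilin f ->
  \sum_(p <- tscale c s) f p.1 p.2 = c *: \sum_(p <- s) f p.1 p.2.
Proof.
by move=> fb; rewrite big_map scaler_sumr; apply: eq_bigr => p _; rewrite bilinZl.
Qed.

End Bilinear.

Section TensorEquality.
Variable k : comPzRingType.
Variables U V : lmodType k.

Lemma teq_trans (s t u : seq (U * V)) : teq s t -> teq t u -> teq s u.
Proof. by move=> st tu Z f fb; rewrite (st Z f fb) (tu Z f fb). Qed.

Lemma teq_sym (s t : seq (U * V)) : teq s t -> teq t s.
Proof. by move=> st Z f fb; rewrite (st Z f fb). Qed.

Lemma teq_congr_tscale_cat c (s s' t t' : seq (U * V)) :
  teq s t -> teq s' t' -> teq (tscale c s ++ s') (tscale c t ++ t').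
Proof.
move=> st st' Z f fb.
by rewrite !big_cat !(sum_tscale _ _ fb) (st Z f fb) (st' Z f fb).
Qed.

Lemma teq_scale_addr (a : U) c (v v' : V) :
  teq [:: (a, c *: v + v')] (tscale c [:: (a, v)] ++ [:: (a, v')]).
Proof. by move=> Z f fb; rewrite big_cat sum_tscale // !big_seq1 bilinDr ?bilinZr. Qed.

End TensorEquality.

Section CanonicalMap.
Variables (k : comPzRingType) (X : Type) (H A : lincat k X).
Variable rho : forall x y, lhom A x y -> seq (lhom A x y * lhom H x y).
Hypothesis A_lincat : is_lincat A.

Lemma lcomp_bilin x y z : bilin (@lcomp k X A x y z).
Proof. exact: A_lincat.1. Qed.

Lemma lcompA x y z w (a : lhom A x y) (b : lhom A y z) (c : lhom A z w) :
  lcomp (lcomp a b) c = lcomp a (lcomp b c).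
Proof. exact: A_lincat.2.1. Qed.

Lemma lcomp1a x y (a : lhom A x y) : lcomp (lid A x) a = a.
Proof. exact: A_lincat.2.2.1. Qed.

Lemma lcompa1 x y (a : lhom A x y) : lcomp a (lid A y) = a.
Proof. exact: A_lincat.2.2.2. Qed.

Definition balanced (U : lmodType k) z x y (f : lhom A z x -> lhom A x y -> U) :=
  forall b, coinv rho b -> forall a a', f (lcomp a b) a' = f a (lcomp b a').

Lemma teqB_sym z x y (s t : seq (lhom A z x * lhom A x y)) :
  teqB rho s t -> teqB rho t s.
Proof. by move=> st U f fb fbal; rewrite (st U f fb fbal). Qed.

Lemma teqB_trans z x y (s t u : seq (lhom A z x * lhom A x y)) :
  teqB rho s t -> teqB rho t u -> teqB rho s u.
Proof. by move=> st tu U f fb fbal; rewrite (st U f fb fbal) (tu U f fb fbal). Qed.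

Section Precomposition.
Variables (U : lmodType k) (w x y z : X) (a : lhom A w x).

Lemma bilin_lcompl (V : lmodType k) (f : lhom A w y -> V -> U) :
  bilin f -> bilin (fun (l : lhom A x y) r => f (lcomp a l) r).
Proof.
move=> fb; split=> c u u' v /=; last exact: fb.2.
by rewrite (lcomp_bilin _ _ _).2 fb.1.
Qed.

Lemma balanced_lcompl (f : lhom A w y -> lhom A y z -> U) :
  balanced f -> balanced (fun (l : lhom A x y) r => f (lcomp a l) r).
Proof. by move=> fbal b cb l r; rewrite -lcompA fbal. Qed.

End Precomposition.

Lemma sum_can (U : lmodType k) z x y (f : lhom A z y -> lhom H x y -> U) s :
  \sum_(t <- can rho s) f t.1 t.2 =
  \sum_(p <- s) \sum_(q <- rho p.2) f (lcomp p.1 q.1) q.2.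
Proof. by rewrite /can big_allpairs_dep. Qed.

Lemma can_tscale_cat z x y c (s s' : seq (lhom A z x * lhom A x y)) :
  teq (can rho (tscale c s ++ s')) (tscale c (can rho s) ++ can rho s').
Proof.
move=> U f fb; rewrite big_cat sum_tscale // !sum_can big_cat big_map.
congr (_ + _); rewrite scaler_sumr; apply: eq_bigr => p _ /=.
rewrite scaler_sumr; apply: eq_bigr => q _.
by rewrite (bilinZl (lcomp_bilin _ _ _)) bilinZl.
Qed.

Lemma can_lid_teq x y (a : lhom A x y) : teq (can rho [:: (lid A x, a)]) (rho a).
Proof. by move=> U f fb; rewrite sum_can big_seq1; apply: eq_bigr => q _; rewrite lcomp1a. Qed.

Section InverseOfCan.
Variables (x y : X) (gamma : lhom H x y -> seq (lhom A y x * lhom A x y)).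

Definition gamma_ext z (u : seq (lhom A z y * lhom H x y))
  : seq (lhom A z x * lhom A x y) :=
  [seq (lcomp p.1 q.1, q.2) | p <- u, q <- gamma p.2].

Lemma sum_gamma_ext (U : lmodType k) z (f : lhom A z x -> lhom A x y -> U) u :
  \sum_(t <- gamma_ext u) f t.1 t.2 =
  \sum_(p <- u) \sum_(q <- gamma p.2) f (lcomp p.1 q.1) q.2.
Proof. by rewrite /gamma_ext big_allpairs_dep. Qed.

Lemma teqB_gamma_ext z (u u' : seq (lhom A z y * lhom H x y)) :
  (forall c h h', teqB rho (gamma (c *: h + h')) (tscale c (gamma h) ++ gamma h')) ->
  teq u u' -> teqB rho (gamma_ext u) (gamma_ext u').
Proof.
move=> gamma_linear uu' U f fb fbal; rewrite !sum_gamma_ext.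
apply: (uu' U (fun a h => \sum_(q <- gamma h) f (lcomp a q.1) q.2)); split.
- move=> c a a' h; rewrite scaler_sumr -big_split /=; apply: eq_bigr => q _.
  by rewrite (lcomp_bilin _ _ _).1 fb.1.
- move=> c a h h'; have fa_bilin := bilin_lcompl a fb.
  rewrite (gamma_linear c h h' U _ fa_bilin (balanced_lcompl a fbal)).
  by rewrite big_cat (sum_tscale _ _ fa_bilin).
Qed.

Lemma can_gamma_ext z (u : seq (lhom A z y * lhom H x y)) :
  (forall h, teq (can rho (gamma h)) [:: (lid A y, h)]) ->
  teq (can rho (gamma_ext u)) u.
Proof.
move=> can_gamma U f fb; rewrite sum_can.
rewrite (sum_gamma_ext (fun a b => \sum_(q <- rho b) f (lcomp a q.1) q.2)).
apply: eq_bigr => p _.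
have := can_gamma p.2 U _ (bilin_lcompl p.1 fb).
rewrite (sum_can (fun l h => f (lcomp p.1 l) h)) big_seq1 /= lcompa1 => <-.
by apply: eq_bigr => r _; apply: eq_bigr => q _; rewrite lcompA.
Qed.

Lemma gamma_ext_can z (s : seq (lhom A z x * lhom A x y)) :
  (forall a, teqB rho (gamma_ext (rho a)) [:: (lid A x, a)]) ->
  teqB rho (gamma_ext (can rho s)) s.
Proof.
move=> gamma_can U f fb fbal; rewrite sum_gamma_ext.
rewrite (sum_can (fun a h => \sum_(r <- gamma h) f (lcomp a r.1) r.2)).
apply: eq_bigr => p _.
have := gamma_can p.2 U _ (bilin_lcompl p.1 fb) (balanced_lcompl p.1 fbal).
rewrite (sum_gamma_ext (fun l r => f (lcomp p.1 l) r)) big_seq1 /= lcompa1 => <-.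
by apply: eq_bigr => q _; apply: eq_bigr => r _; rewrite lcompA.
Qed.

End InverseOfCan.

Lemma can_bijective_of_gamma_cond z x y : gamma_cond rho x y -> can_bijective rho z x y.
Proof.
move=> [gamma [gamma_linear [can_gamma gamma_can]]]; split.
- move=> s s' ss'.
  apply: teqB_trans (teqB_sym (gamma_ext_can _ gamma_can)) _.
  exact: teqB_trans (teqB_gamma_ext gamma_linear ss') (gamma_ext_can _ gamma_can).
- by move=> u; exists (gamma_ext gamma u); exact: can_gamma_ext.
Qed.

Lemma can_section z x y : can_bijective rho z x y ->
  exists g : seq (lhom A z y * lhom H x y) -> seq (lhom A z x * lhom A x y),
    [/\ forall u, teq (can rho (g u)) u,
        forall u u', teq u u' -> teqB rho (g u) (g u') &
        forall c u u', teqB rho (g (tscale c u ++ u')) (tscale c (g u) ++ g u')].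
Proof.
move=> [can_inj can_surj].
pose g u := proj1_sig (constructive_indefinite_description _ (can_surj u)).
have can_g u : teq (can rho (g u)) u.
  exact: proj2_sig (constructive_indefinite_description _ (can_surj u)).
exists g; split=> // [u u' uu' | c u u']; apply: can_inj.
- exact: teq_trans (can_g u) (teq_trans uu' (teq_sym (can_g u'))).
- apply: teq_trans (can_g _) (teq_trans _ (teq_sym (can_tscale_cat _ _ _))).
  exact: teq_congr_tscale_cat (teq_sym (can_g u)) (teq_sym (can_g u')).
Qed.

Lemma can_left_inverse_of_bijective z x y :
  can_bijective rho z x y -> can_has_left_inverse rho z x y.
Proof.
move=> can_bij; have [can_inj _] := can_bij.
have [g [can_g g_teq g_linear]] := can_section can_bij.
by exists g; do !split=> //; move=> s; apply: can_inj; exact: can_g.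
Qed.

Lemma gamma_cond_of_can x y :
  can_bijective rho y x y -> can_has_left_inverse rho x x y -> gamma_cond rho x y.
Proof.
move=> can_bij [l [l_teq [_ l_can]]].
have [g [can_g g_teq g_linear]] := can_section can_bij.
have can_gamma h : teq (can rho (g [:: (lid A y, h)])) [:: (lid A y, h)] := can_g _.
exists (fun h => g [:: (lid A y, h)]); split; last split=> // a.
  move=> c h h'; exact: teqB_trans (g_teq _ _ (teq_scale_addr _ _ _ _)) (g_linear _ _ _).
have can_t : teq (can rho (gamma_ext (fun h => g [:: (lid A y, h)]) (rho a)))
                 (can rho [:: (lid A x, a)]).
  exact: teq_trans (can_gamma_ext _ can_gamma) (teq_sym (can_lid_teq a)).
exact: teqB_trans (teqB_sym (l_can _)) (teqB_trans (l_teq _ _ can_t) (l_can _)).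
Qed.

End CanonicalMap.

Theorem theorem3p5 (k : comPzRingType) (X : Type) (H : lincat k X)
  (D : forall x y, lhom H x y -> seq (lhom H x y * lhom H x y))
  (e : forall x y, lhom H x y -> k) (A : lincat k X)
  (rho : forall x y, lhom A x y -> seq (lhom A x y * lhom H x y)) :
  is_semiHopf D e -> is_comodcat D e rho ->
  ((forall x y z : X, can_bijective rho z x y) <->
   (forall x y : X, can_bijective rho y x y /\ can_has_left_inverse rho x x y)) /\
  ((forall x y : X, can_bijective rho y x y /\ can_has_left_inverse rho x x y) <->
   (forall x y : X, gamma_cond rho x y)).
Proof.
move=> _ [A_lincat _].
have one_two (can_bij : forall x y z, can_bijective rho z x y) x y :
    can_bijective rho y x y /\ can_has_left_inverse rho x x y.
  by split; [exact: can_bij | exact: can_left_inverse_of_bijective (can_bij x y x)].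
have two_three (can2 : forall x y, can_bijective rho y x y /\ can_has_left_inverse rho x x y)
    x y : gamma_cond rho x y.
  by have [can_bij can_linv] := can2 x y; exact: gamma_cond_of_can.
have three_one (gamma : forall x y, gamma_cond rho x y) x y z : can_bijective rho z x y.
  exact: can_bijective_of_gamma_cond.
split; split=> hyp.
- exact: one_two hyp.
- exact: three_one (two_three hyp).
- exact: two_three hyp.
- exact: one_two (three_one hyp).
Qed.
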